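(* Let $a,c,p\in\mathbb{C}$ with $-c\notin\mathbb{N}\cup\{0\}$. Define the sequence $(u_n)_{n\ge 0}$ by $u_0=1$, $u_1=a/c+p$ and, for all integers $n\ge 1$, \[ u_{n+1}=\frac{a+cp+2np+n}{(n+1)(c+n)}\,u_n-\frac{p(p+1)}{(n+1)(c+n)}\,u_{n-1}. \] Then \[ e^{pz}M(a,c;z)=\sum_{n=0}^\infty u_n z^n,\qquad z\in\mathbb{C}. \]
   Context: For $a\in\mathbb{C}$, $(a)_n=a(a+1)\cdots(a+n-1)$ denotes the Pochhammer symbol, with $(a)_0=1$. For $a,c\in\mathbb{C}$ with $-c\notin\mathbb{N}\cup\{0\}$, the confluent hypergeometric (Kummer) function is $M(a,c;z)=\sum_{n=0}^\infty \frac{(a)_n}{(c)_n\,n!}z^n$, $z\in\mathbb{C}$. *)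

From HB Require Import structures.
From mathcomp Require Import all_boot all_order all_algebra.
From mathcomp Require Import all_classical all_reals all_analysis.
From mathcomp Require Export complex.
Import Order.TTheory GRing.Theory Num.Theory.
Import numFieldNormedType.Exports.

Set Implicit Arguments.
Unset Strict Implicit.
Unset Printing Implicit Defensive.

Local Open Scope ring_scope.
Local Open Scope classical_set_scope.

(* The complex numbers over a real type R (R[i], with the modulus as norm),
   seen as a numClosedFieldType so that MathComp-Analysis' topology applies. *)
Definition Cplx (R : realType) : numClosedFieldType := R[i].

Section Defs.
Variable R : realType.
Local Notation C := (Cplx R).

Definition poch (a : C) (n : nat) : C := \prod_(i < n) (a + i%:R).

Definition kummer_term (a c z : C) (n : nat) : C :=
  poch a n / (poch c n * (n`!)%:R) * z ^+ n.

Definition kummerM (a c z : C) : C := limn (series (kummer_term a c z)).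

Definition expC (z : C) : C := limn (series (fun n => z ^+ n / (n`!)%:R)).

(* upair n = (u_n, u_{n+1}) for the recurrence of the statement:
   u_0 = 1, u_1 = a/c + p, and for m >= 1
   u_{m+1} = (a+cp+2mp+m)/((m+1)(c+m)) u_m - p(p+1)/((m+1)(c+m)) u_{m-1}. *)
Fixpoint upair (a c p : C) (n : nat) : C * C :=
  match n with
  | 0 => (1, a / c + p)
  | n'.+1 =>
      let: (x, y) := upair a c p n' in
      let m : C := (n'.+1)%:R in
      (y, (a + c * p + 2 * m * p + m) / ((m + 1) * (c + m)) * y
          - p * (p + 1) / ((m + 1) * (c + m)) * x)
  end.

Definition useq (a c p : C) (n : nat) : C := (upair a c p n).1.

End Defs.

(* The coefficients of e^{pz} M(a,c;z) are the convolutions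
   W_n = sum_{i+k=n} m_i e_k of m_i = (a)_i/((c)_i i!) and e_k = p^k/k!.
   These satisfy (i+1)(c+i) m_{i+1} = (a+i) m_i and (k+1) e_{k+1} = p e_k;
   splitting the weight (N+1)(c+N) = i(c+i-1) + k(i+c+N) along the
   antidiagonal i + k = N+1 and shifting i, resp. k, by one turns these two
   first-order recurrences into the three-term recurrence of u_n, so u_n = W_n.
   By the ratio test the terms of both factor series are O(4^-n), which is
   enough for their Cauchy product to converge to the product of the sums. *)

From HB Require Import structures.
From mathcomp Require Import all_boot all_order all_algebra.
From mathcomp Require Import all_classical all_reals all_analysis.
From mathcomp Require Import complex.
From mathcomp Require Import ring lra.
Import Order.TTheory GRing.Theory Num.Theory.
Import numFieldNormedType.Exports.
Set Implicit Arguments.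
Unset Strict Implicit.
Unset Printing Implicit Defensive.

Local Open Scope ring_scope.
Local Open Scope classical_set_scope.

Section Convolution.
Variable R : comPzRingType.
Implicit Types (x y : nat -> R) (h : nat -> nat -> R).

Definition antidiag_sum h n : R := \sum_(i < n.+1) h i (n - i)%N.

Definition conv x y : nat -> R := antidiag_sum (fun i k => x i * y k).

Lemma eq_antidiag_sum h1 h2 n :
  (forall i k, (i + k)%N = n -> h1 i k = h2 i k) ->
  antidiag_sum h1 n = antidiag_sum h2 n.
Proof. by move=> eq_h; apply: eq_bigr => i _; rewrite eq_h // subnKC // -ltnS. Qed.

Lemma antidiag_sumSl h n :
  antidiag_sum h n.+1 = h 0%N n.+1 + antidiag_sum (fun i k => h i.+1 k) n.
Proof. by rewrite /antidiag_sum big_ord_recl subn0. Qed.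

Lemma antidiag_sumSr h n :
  antidiag_sum h n.+1 = antidiag_sum (fun i k => h i k.+1) n + h n.+1 0%N.
Proof.
rewrite /antidiag_sum big_ord_recr subnn /=; congr (_ + _).
by apply: eq_bigr => i _; rewrite subSn // -ltnS.
Qed.

Lemma antidiag_sumD h1 h2 n :
  antidiag_sum (fun i k => h1 i k + h2 i k) n = antidiag_sum h1 n + antidiag_sum h2 n.
Proof. exact: big_split. Qed.

Lemma antidiag_sumB h1 h2 n :
  antidiag_sum (fun i k => h1 i k - h2 i k) n = antidiag_sum h1 n - antidiag_sum h2 n.
Proof. exact: sumrB. Qed.

Lemma antidiag_sumZ r h n :
  antidiag_sum (fun i k => r * h i k) n = r * antidiag_sum h n.
Proof. by rewrite /antidiag_sum mulr_sumr. Qed.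

Lemma conv_mulXn x y z n :
  conv (fun i => x i * z ^+ i) (fun k => y k * z ^+ k) n = conv x y n * z ^+ n.
Proof.
rewrite /conv /antidiag_sum mulr_suml; apply: eq_bigr => i _.
have -> : z ^+ n = z ^+ i * z ^+ (n - i) by rewrite -exprD subnKC // -ltnS.
by rewrite mulrACA.
Qed.

Lemma series_conv x y N :
  series (conv x y) N = \sum_(0 <= i < N) x i * series y (N - i)%N.
Proof.
elim: N => [|N IH]; first by rewrite seriesEnat /= !big_geq.
rewrite seriesSr IH /conv /antidiag_sum -(big_mkord xpredT (fun i => x i * y (N - i)%N)).
rewrite !big_nat_recr //= subSnn subnn addrA -big_split /=; congr (_ + _).
  by apply: eq_big_nat => i /andP[_ ltiN]; rewrite subSn ?seriesSr ?mulrDr // ltnW.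
by rewrite seriesEnat /= big_nat1.
Qed.

Lemma series_mul_sub_conv x y N :
  series x N * series y N - series (conv x y) N =
  \sum_(0 <= i < N) x i * \sum_((N - i)%N <= j < N) y j.
Proof.
rewrite series_conv {1}seriesEnat /= big_distrl -sumrB.
by apply: eq_big_nat => i _; rewrite -mulrBr sub_series_geq // leq_subr.
Qed.

Variables (a c p : R) (x y : nat -> R).
Hypothesis x_rec : forall i, i.+1%:R * (c + i%:R) * x i.+1 = (a + i%:R) * x i.
Hypothesis y_rec : forall k, k.+1%:R * y k.+1 = p * y k.

Lemma antidiag_sum_weightl (g : nat -> R) n :
  antidiag_sum (fun i k => i%:R * (c + i%:R - 1) * x i * g k) n.+1 =
  antidiag_sum (fun i k => (a + i%:R) * x i * g k) n.
Proof.
rewrite antidiag_sumSl !mul0r add0r; apply: eq_antidiag_sum => i k _.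
by rewrite -x_rec -natr1 addrA addrK.
Qed.

Lemma antidiag_sum_weightr (f : nat -> R) n :
  antidiag_sum (fun i k => k%:R * (f i * y k)) n.+1 = p * conv f y n.
Proof.
rewrite antidiag_sumSr mul0r addr0 /conv /antidiag_sum mulr_sumr.
by apply: eq_bigr => i _; rewrite mulrCA y_rec mulrCA.
Qed.

Lemma conv_rec n : let m := n.+1%:R in
  (m + 1) * (c + m) * conv x y n.+2 =
  (a + c * p + 2 * m * p + m) * conv x y n.+1 - p * (p + 1) * conv x y n.
Proof.
move=> m.
have split_weight : (m + 1) * (c + m) * conv x y n.+2 =
    antidiag_sum (fun i k => i%:R * (c + i%:R - 1) * x i * y k) n.+2 +
    antidiag_sum (fun i k => k%:R * ((i%:R + c + m) * x i * y k)) n.+2.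
  rewrite /conv -antidiag_sumZ -antidiag_sumD; apply: eq_antidiag_sum => i k sum_ik.
  have -> : m = i%:R + k%:R - 1 by rewrite -natrD sum_ik -addn1 natrD addrK.
  ring.
rewrite split_weight antidiag_sum_weightl antidiag_sum_weightr.
have -> : p * (p + 1) * conv x y n = (p + 1) * (p * conv x y n) by ring.
rewrite -(antidiag_sum_weightr x n) /conv -!antidiag_sumZ -antidiag_sumD -antidiag_sumB.
apply: eq_antidiag_sum => i k sum_ik /=.
have -> : m = i%:R + k%:R by rewrite -natrD sum_ik.
ring.
Qed.

End Convolution.

Section KummerCoefficients.
Variable R : realType.
Local Notation C := (Cplx R).

Definition kummer_coef (a c : C) n : C := poch a n / (poch c n * (n`!)%:R).

Definition exp_term (w : C) n : C := w ^+ n / (n`!)%:R.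

Lemma pochS (x : C) n : poch x n.+1 = poch x n * (x + n%:R).
Proof. by rewrite /poch big_ord_recr. Qed.

Lemma kummer_coefS a c n :
  kummer_coef a c n.+1 = kummer_coef a c n * ((a + n%:R) / (n.+1%:R * (c + n%:R))).
Proof. by rewrite /kummer_coef !pochS factS natrM !invfM; ring. Qed.

Lemma kummer_termE a c z n : kummer_term (R:=R) a c z n = kummer_coef a c n * z ^+ n.
Proof. by []. Qed.

Lemma kummer_termS a c z n :
  kummer_term (R:=R) a c z n.+1 =
  kummer_term a c z n * ((a + n%:R) * z / (n.+1%:R * (c + n%:R))).
Proof. by rewrite !kummer_termE kummer_coefS exprS; ring. Qed.

Lemma exp_termS w n : exp_term w n.+1 = exp_term w n * (w / n.+1%:R).
Proof. by rewrite /exp_term exprS factS natrM !invfM; ring. Qed.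

Lemma exp_termM w z n : exp_term (w * z) n = exp_term w n * z ^+ n.
Proof. by rewrite /exp_term exprMn mulrAC. Qed.

Lemma exp_term_rec w k : k.+1%:R * exp_term w k.+1 = w * exp_term w k.
Proof. by rewrite exp_termS mulrCA [_%:R * _]mulrC divfK ?pnatr_eq0 // mulrC. Qed.

Variables (a c p : C).
Hypothesis hc : forall n : nat, c != - n%:R.

Lemma c_addn_neq0 n : c + n%:R != 0.
Proof. by rewrite addr_eq0. Qed.

Lemma kummer_coef_rec i :
  i.+1%:R * (c + i%:R) * kummer_coef a c i.+1 = (a + i%:R) * kummer_coef a c i.
Proof.
have d_neq0 : i.+1%:R * (c + i%:R) != 0 by rewrite mulf_neq0 ?pnatr_eq0 ?c_addn_neq0.
by rewrite kummer_coefS mulrCA [_ * (_ / _)]mulrC divfK // mulrC.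
Qed.

Lemma upair_conv n :
  upair (R:=R) a c p n =
  (conv (kummer_coef a c) (exp_term p) n, conv (kummer_coef a c) (exp_term p) n.+1).
Proof.
elim: n => [|n IH].
  rewrite /conv /antidiag_sum /kummer_coef /exp_term /poch /=.
  rewrite !big_ord_recl !big_ord0 /bump /= ?subnn ?subn0 ?addn0 ?fact0 ?expr0 ?expr1 /=.
  by rewrite !(divr1, mulr1, mul1r, addr0, mulr1n, invr1) addrC.
rewrite /= IH; congr pair.
have := conv_rec kummer_coef_rec (exp_term_rec p) n => /= rec.
have d_neq0 : (n.+1%:R + 1) * (c + n.+1%:R) != 0.
  by rewrite mulf_neq0 ?c_addn_neq0 // natr1 pnatr_eq0.
by rewrite ![_ / _ * conv _ _ _]mulrAC -mulrBl -rec [_ * conv _ _ _]mulrC mulfK.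
Qed.

Lemma useq_mulXn z n :
  useq a c p n * z ^+ n = conv (kummer_term a c z) (exp_term (p * z)) n.
Proof.
rewrite /useq upair_conv /= -conv_mulXn.
by congr (conv _ _ n); apply: funext => k; rewrite exp_termM.
Qed.

End KummerCoefficients.

Section ComplexSeries.
Variable R : realType.
Local Notation C := (Cplx R).
Local Notation normc := (@Normc.normc R).

Lemma normc_ge0 (x : C) : 0 <= normc x.
Proof. by case: x => x y; rewrite /Normc.normc sqrtr_ge0. Qed.

Lemma normc_Re_le (x : C) : `|complex.Re x| <= normc x.
Proof. by case: x => x y; rewrite /Normc.normc -sqrtr_sqr ler_wsqrtr // lerDl sqr_ge0. Qed.

Lemma normc_Im_le (x : C) : `|complex.Im x| <= normc x.
Proof. by case: x => x y; rewrite /Normc.normc -sqrtr_sqr ler_wsqrtr // lerDr sqr_ge0. Qed.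

Lemma normc_le_ReIm (x : C) : normc x <= `|complex.Re x| + `|complex.Im x|.
Proof.
case: x => x y; rewrite /Normc.normc /=.
rewrite -(ger0_norm (addr_ge0 (normr_ge0 x) (normr_ge0 y))) -sqrtr_sqr ler_wsqrtr //.
by rewrite sqrrD !real_normK ?num_real // -addrA lerD2l lerDr mulrn_wge0 // mulr_ge0.
Qed.

Lemma normc_sum (I : Type) (r : seq I) (P : pred I) (F : I -> C) :
  normc (\sum_(i <- r | P i) F i) <= \sum_(i <- r | P i) normc (F i).
Proof.
elim/big_ind2 : _ => [|x1 x2 y1 y2 le1 le2 |//]; first by rewrite Normc.normc0.
exact: le_trans (le_normcD _ _) (lerD le1 le2).
Qed.

Lemma normc_natr n : normc (n%:R : C) = n%:R.
Proof. by rewrite -[n%:R]/((1 : C) *+ n) normcMn Normc.normc1. Qed.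

Lemma normc_div_le (t d : C) (e : R) :
  0 < normc d -> normc t <= e * normc d -> normc (t / d) <= e.
Proof. by move=> d_gt0; rewrite Normc.normcM Normc.normcV ler_pdivrMr. Qed.

Lemma cvg_normc_le (u : C ^nat) (l : C) (r : R ^nat) :
  r @ \oo --> 0 -> (forall n, normc (u n - l) <= r n) -> u @ \oo --> l.
Proof.
move=> r_cvg0 le_ur; apply/cvgrPdist_lt => e; rewrite ltcE /= => /andP[/eqP Im_e Re_e].
move/cvgrPdist_lt: r_cvg0 => /(_ _ Re_e); apply: filterS => n ltr.
have -> : e = ((complex.Re e)%:C)%C by case: e {Re_e ltr} Im_e => ? ? /= ->.
rewrite -[X in X < _]/(((normc (l - u n))%:C)%C) ltcR -opprB normcN.
by apply: le_lt_trans (le_ur n) (le_lt_trans _ ltr); rewrite sub0r normrN ler_norm.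
Qed.

Lemma cvg_Complex (u : C ^nat) (lr li : R) :
  (fun n => complex.Re (u n)) @ \oo --> lr ->
  (fun n => complex.Im (u n)) @ \oo --> li -> u @ \oo --> ((lr +i* li)%C : C).
Proof.
move=> Re_cvg Im_cvg.
apply: (@cvg_normc_le _ _ (fun n => `|complex.Re (u n) - lr| + `|complex.Im (u n) - li|)).
  rewrite -[0 : R](addr0 0); apply: cvgD.
    by have := cvg_norm (cvgB Re_cvg (cvg_cst lr)); rewrite subrr normr0; exact.
  by have := cvg_norm (cvgB Im_cvg (cvg_cst li)); rewrite subrr normr0; exact.
by move=> n; case: (u n) => x y; exact: (normc_le_ReIm ((x +i* y)%C - (lr +i* li)%C)).
Qed.

(* [Cplx R] carries no complete normed-module structure, so the limit is
   assembled from the limits of the real and imaginary parts. *)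
Lemma cvg_series_normc_geometric (x : C ^nat) (K q : R) : 0 <= q -> q < 1 ->
  (forall n, normc (x n) <= K * q ^+ n) -> cvgn (series x).
Proof.
move=> q_ge0 q_lt1 le_x.
have geo_cvg : cvgn (series (geometric K q)).
  by apply: is_cvg_geometric_series; rewrite ger0_norm.
have part_cvg (f : C -> R) : (forall z, `|f z| <= normc z) -> cvgn (series (f \o x)).
  move=> le_f; apply: normed_cvg; apply: series_le_cvg geo_cvg => n /=.
  - exact: normr_ge0.
  - exact: le_trans (normc_ge0 _) (le_x n).
  - exact: le_trans (le_f _) (le_x n).
apply: cvgP; apply: cvg_Complex.
  have -> : (fun n => complex.Re (series x n)) = series (@complex.Re R \o x).
    by apply: funext => n; rewrite !seriesEnat /= raddf_sum.
  exact: part_cvg normc_Re_le.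
have -> : (fun n => complex.Im (series x n)) = series (@complex.Im R \o x).
  by apply: funext => n; rewrite !seriesEnat /= raddf_sum.
exact: part_cvg normc_Im_le.
Qed.

End ComplexSeries.

Section CauchyProduct.
Variable R : realType.
Local Notation C := (Cplx R).
Local Notation normc := (@Normc.normc R).
Variables (q Kx Ky : R) (x y : C ^nat).
Hypotheses (q_gt0 : 0 < q) (q_lt1 : q < 1) (Kx_ge0 : 0 <= Kx) (Ky_ge0 : 0 <= Ky).
(* The exponent [2 * n] leaves a spare factor [q ^+ N] on the region
   [i + j >= N] where the partial sums of the product and of the
   Cauchy product differ. *)
Hypothesis le_x : forall n, normc (x n) <= Kx * q ^+ (2 * n).
Hypothesis le_y : forall n, normc (y n) <= Ky * q ^+ (2 * n).

Let q_ge0 : 0 <= q. Proof. exact: ltW. Qed.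

Lemma sum_expr_le N : \sum_(0 <= j < N) q ^+ j <= (1 - q)^-1.
Proof.
have := geometric_le_lim N ler01 q_gt0 (_ : `|q| < 1); rewrite ger0_norm // mul1r.
by rewrite seriesEnat /=; under eq_bigr do rewrite /geometric /= mul1r; apply.
Qed.

Lemma normc_sum_tail_le M N : (M <= N)%N ->
  normc (\sum_(M <= j < N) y j) <= Ky * q ^+ M / (1 - q).
Proof.
move=> le_MN; apply: le_trans (normc_sum _ _ _) _.
apply: (@le_trans _ _ (Ky * q ^+ M * \sum_(M <= j < N) q ^+ j)).
  rewrite mulr_sumr; apply: ler_sum_nat => j /andP[le_Mj _]; apply: le_trans (le_y j) _.
  rewrite mul2n -addnn exprD mulrA ler_wpM2r ?exprn_ge0 // ler_wpM2l //.
  by apply: ler_wiXn2l => //; apply: ltW.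
rewrite ler_wpM2l ?mulr_ge0 ?exprn_ge0 //; apply: le_trans (sum_expr_le N).
rewrite (big_cat_nat (leq0n M) le_MN) /= lerDr.
by apply: sumr_ge0 => j _; rewrite exprn_ge0.
Qed.

Lemma normc_series_mul_sub_conv_le N :
  normc (series x N * series y N - series (conv x y) N) <=
  Kx * Ky / (1 - q) ^+ 2 * q ^+ N.
Proof.
rewrite series_mul_sub_conv; apply: le_trans (normc_sum _ _ _) _.
apply: (@le_trans _ _ (Kx * Ky / (1 - q) * q ^+ N * \sum_(0 <= i < N) q ^+ i)).
  rewrite mulr_sumr; apply: ler_sum_nat => i /andP[_ lt_iN]; rewrite Normc.normcM.
  have -> : Kx * Ky / (1 - q) * q ^+ N * q ^+ i =
      Kx * q ^+ (2 * i) * (Ky * q ^+ (N - i) / (1 - q)).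
    rewrite -{1}(subnKC (ltnW lt_iN)) mul2n -addnn !exprD; ring.
  exact: ler_pM (normc_ge0 _) (normc_ge0 _) (le_x i) (normc_sum_tail_le (leq_subr i N)).
apply: le_trans (ler_wpM2l _ (sum_expr_le N)) _.
  by rewrite !mulr_ge0 ?invr_ge0 ?subr_ge0 ?exprn_ge0 // ltW.
by rewrite expr2 invfM mulrA mulrAC.
Qed.

Lemma cvg_series_conv :
  series (conv x y) @ \oo --> limn (series x) * limn (series y).
Proof.
have cvg_series (u : C ^nat) K : (forall n, normc (u n) <= K * q ^+ (2 * n)) ->
    cvgn (series u).
  move=> le_u; apply: (@cvg_series_normc_geometric _ _ K (q ^+ 2)) => [||n].
  - exact: exprn_ge0.
  - by rewrite expr_lt1.
  - by rewrite -exprM.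
have gap_cvg0 : (fun N => series x N * series y N - series (conv x y) N) @ \oo --> 0.
  apply: (cvg_normc_le (@cvg_geometric _ (Kx * Ky / (1 - q) ^+ 2) q _)) => [|N].
    by rewrite ger0_norm.
  by rewrite subr0; exact: normc_series_mul_sub_conv_le.
have -> : series (conv x y) =
    (fun N => series x N * series y N - (series x N * series y N - series (conv x y) N)).
  by apply: funext => N; rewrite opprB addrC subrK.
rewrite -[X in _ --> X]subr0; apply: cvgB gap_cvg0.
exact: cvgM (cvg_series _ _ le_x) (cvg_series _ _ le_y).
Qed.

End CauchyProduct.

Section RatioTest.
Variable R : realType.
Local Notation C := (Cplx R).
Local Notation normc := (@Normc.normc R).

Lemma geometric_bound_of_ratio (f : R ^nat) (r : R) N0 :
  0 < r -> (forall n, 0 <= f n) -> (forall n, (N0 <= n)%N -> f n.+1 <= r * f n) ->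
  exists2 K, 0 <= K & forall n, f n <= K * r ^+ n.
Proof.
move=> r_gt0 f_ge0 ratio.
have rX_gt0 n : 0 < r ^+ n by rewrite exprn_gt0.
pose K := \sum_(i < N0.+1) f i / r ^+ i.
have le_init n : (n <= N0)%N -> f n <= K * r ^+ n.
  move=> le_nN; rewrite -ler_pdivrMr // /K (bigD1 (Ordinal (le_nN : (n < N0.+1)%N))) //=.
  by rewrite lerDl sumr_ge0 // => i _; rewrite divr_ge0 // ltW.
exists K; first by rewrite sumr_ge0 // => i _; rewrite divr_ge0 // ltW.
elim=> [|n IH]; first exact: le_init.
have [le_nN|lt_Nn] := leqP n.+1 N0; first exact: le_init.
apply: le_trans (ratio n _) _; first by rewrite -ltnS.
by rewrite exprS mulrCA ler_wpM2l // ltW.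
Qed.

Lemma normc_geometric_bound_of_ratio (u r : C ^nat) (q : R) N0 : 0 < q ->
  (forall n, u n.+1 = u n * r n) -> (forall n, (N0 <= n)%N -> normc (r n) <= q ^+ 2) ->
  exists2 K, 0 <= K & forall n, normc (u n) <= K * q ^+ (2 * n).
Proof.
move=> q_gt0 u_rec small_r.
have [|n|n le_Nn|K K_ge0 le_u] := @geometric_bound_of_ratio (fun n => normc (u n)) (q ^+ 2) N0.
- by rewrite exprn_gt0.
- exact: normc_ge0.
- by rewrite u_rec Normc.normcM mulrC ler_wpM2r ?normc_ge0 ?small_r.
by exists K => // n; rewrite exprM.
Qed.

Lemma kummer_ratio_small (a c z : C) (e : R) : 0 < e -> exists N0, forall n,
  (N0 <= n)%N -> normc ((a + n%:R) * z / (n.+1%:R * (c + n%:R))) <= e.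
Proof.
move=> e_gt0; set A := normc a; set Z := normc z; set Cn := normc c.
have [A_ge0 Z_ge0 Cn_ge0] : [/\ 0 <= A, 0 <= Z & 0 <= Cn] by rewrite !normc_ge0.
exists (Num.bound (Cn + Z * (1 + A) / e)) => n le_Nn.
have lt_n : Z * (1 + A) < e * (n%:R - Cn).
  rewrite [e * _]mulrC -ltr_pdivrMr // ltrBrDl; apply: lt_le_trans (archi_boundP _) _.
    by rewrite addr_ge0 ?divr_ge0 ?mulr_ge0 ?addr_ge0 // ltW.
  by rewrite ler_nat.
have le_cn : n%:R - Cn <= normc (c + n%:R).
  rewrite lerBlDr -[X in X <= _]normc_natr -[X in normc X](addKr c).
  by rewrite addrC; apply: le_trans (le_normcD _ _) _; rewrite normcN.
have le_an : normc ((a + n%:R) * z) <= (A + n%:R) * Z.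
  by rewrite Normc.normcM ler_wpM2r // (le_trans (le_normcD _ _)) ?normc_natr.
have norm_d : normc (n.+1%:R * (c + n%:R)) = n.+1%:R * normc (c + n%:R).
  by rewrite Normc.normcM normc_natr.
apply: normc_div_le; rewrite norm_d.
  have n_sub_gt0 : 0 < n%:R - Cn.
    by rewrite -(pmulr_rgt0 _ e_gt0) (le_lt_trans _ lt_n) // mulr_ge0 // addr_ge0.
  by rewrite mulr_gt0 // (lt_le_trans n_sub_gt0 le_cn).
(* e (n+1) |c+n| - (A+n) Z is the sum of the three nonnegative terms below. *)
have slack_c : 0 <= e * n.+1%:R * (normc (c + n%:R) - (n%:R - Cn)).
  by rewrite !mulr_ge0 ?subr_ge0 // ltW.
have slack_n : 0 <= n.+1%:R * (e * (n%:R - Cn) - Z * (1 + A)).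
  by rewrite mulr_ge0 // subr_ge0 ltW.
have slack_a : 0 <= Z * (n%:R * A + 1) by rewrite mulr_ge0 // addr_ge0 ?mulr_ge0.
apply: le_trans le_an _; rewrite -natr1 in slack_c slack_n *; lra.
Qed.

Lemma exp_ratio_small (w : C) (e : R) : 0 < e ->
  exists N0, forall n, (N0 <= n)%N -> normc (w / n.+1%:R) <= e.
Proof.
move=> e_gt0; exists (Num.bound (normc w / e)) => n le_Nn.
apply: normc_div_le; rewrite normc_natr // mulrC -ler_pdivrMr //.
apply/ltW/(lt_le_trans (archi_boundP _)); first by rewrite divr_ge0 ?normc_ge0 ?ltW.
by rewrite ler_nat (leq_trans le_Nn).
Qed.

End RatioTest.

Theorem theorem2p1 (R : realType) (a c p : Cplx R)
    (hc : forall n : nat, c != - (n%:R)) (z : Cplx R) :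
  series (fun n => useq a c p n * z ^+ n) @ \oo --> expC (p * z) * kummerM a c z.
Proof.
have half_gt0 : (0 : R) < 2^-1 by rewrite invr_gt0.
have half_lt1 : (2^-1 : R) < 1 by rewrite invf_lt1 // ltr1n.
have quarter_gt0 : (0 : R) < 2^-1 ^+ 2 by rewrite exprn_gt0.
have [N1 small1] := kummer_ratio_small a c z quarter_gt0.
have [Kx Kx_ge0 le_x] := normc_geometric_bound_of_ratio half_gt0 (kummer_termS a c z) small1.
have [N2 small2] := exp_ratio_small (p * z) quarter_gt0.
have [Ky Ky_ge0 le_y] := normc_geometric_bound_of_ratio half_gt0 (exp_termS (p * z)) small2.
rewrite (funext (@useq_mulXn R a c p hc z)) [expC _ * _]mulrC.
exact: cvg_series_conv half_gt0 half_lt1 Kx_ge0 Ky_ge0 le_x le_y.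
Qed.
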